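(* The category $\mathbf{StoneLPries}$ of Stone L-spaces and all L-morphisms between them is a full subcategory of the category $\mathbf{CohLPries}$ of coherent L-spaces and coherent L-morphisms; that is, every Stone L-space is a coherent L-space and every L-morphism between Stone L-spaces is coherent.
   Context: A Priestley space is a Stone space $X$ with a partial order such that clopen upsets separate points. An L-space is a Priestley space in which the downset of each clopen set is clopen and the closure of each open upset is open. ${\sf ClopUp}(X)$ is the set of clopen upsets; $\mathrm{cl}$ denotes closure. An L-morphism is a continuous order-preserving map $f:X\to X'$ between L-spaces with $f^{-1}(\mathrm{cl}\,U)=\mathrm{cl}\,f^{-1}(U)$ for every open upset $U$ of $X'$. The spatial part of $X$ is $Y=\{y\in X\mid{\downarrow}y\text{ clopen}\}$. A Scott upset is a closed upset $F$ with $\min F\subseteq Y$; ${\sf ClopSUp}(X)$ is the set of clopen Scott upsets. A biset is a set that is both an upset and a downset; ${\sf ClopBi}(X)$ is the set of clopen bisets. For $U,V\in{\sf ClopUp}(X)$, $V\ll U$ means that for every open upset $W$, $U\subseteq\mathrm{cl}\,W$ implies $V\subseteq W$; $\ker U=\bigcup\{V\in{\sf ClopUp}(X)\mid V\ll U\}$; $\mathrm{core}\,U=\bigcup\{V\in{\sf ClopSUp}(X)\mid V\subseteq U\}$; $\mathrm{cen}\,U=\bigcup\{V\in{\sf ClopBi}(X)\mid V\subseteq U\}$. $X$ is L-compact if $X=\ker X$. A Stone L-space is an L-compact L-space with $\mathrm{cen}\,U$ dense in $U$ for each $U\in{\sf ClopUp}(X)$. A coherent L-space is an L-compact L-space with $\mathrm{core}\,U$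 dense in $U$ for each $U\in{\sf ClopUp}(X)$ and $\ker(U\cap V)=\ker U\cap\ker V$ for all $U,V\in{\sf ClopUp}(X)$. An L-morphism $f:X_1\to X_2$ is coherent if $f^{-1}(\mathrm{core}\,U)\subseteq\mathrm{core}\,f^{-1}(U)$ for all $U\in{\sf ClopUp}(X_2)$. *)

From HB Require Import structures.
From mathcomp Require Import all_boot all_order.
From mathcomp Require Import boolp classical_sets topology.
Set Implicit Arguments. Unset Strict Implicit. Unset Printing Implicit Defensive.
Local Open Scope classical_set_scope.

Section Defs.
Context {X : topologicalType} (le : X -> X -> Prop).

Definition partial_order := [/\ forall x, le x x,
  forall x y, le x y -> le y x -> x = y &
  forall x y z, le x y -> le y z -> le x z].

Definition upset (A : set X) := forall x y, A x -> le x y -> A y.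
Definition downset (A : set X) := forall x y, A y -> le x y -> A x.
Definition down (A : set X) : set X := [set x | exists2 y, A y & le x y].

Definition stone_space := [/\ compact [set: X], hausdorff_space X & zero_dimensional X].

Definition priestley_space := [/\ stone_space, partial_order &
  forall x y, ~ le x y -> exists U : set X, [/\ clopen U, upset U, U x & ~ U y]].

Definition L_space := [/\ priestley_space,
  forall U : set X, clopen U -> clopen (down U) &
  forall U : set X, open U -> upset U -> open (closure U)].

Definition ClopUp (U : set X) := clopen U /\ upset U.

Definition spatial : set X := [set y | clopen (down [set y])].

Definition minimal_elts (F : set X) : set X :=
  [set x | F x /\ forall y, F y -> le y x -> y = x].

Definition ScottUp (F : set X) := [/\ closed F, upset F & minimal_elts F `<=` spatial].
Definition ClopSUp (U : set X) := clopen U /\ ScottUp U.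
Definition ClopBi (U : set X) := [/\ clopen U, upset U & downset U].

Definition waybelow (V U : set X) :=
  forall W : set X, open W -> upset W -> U `<=` closure W -> V `<=` W.

Definition ker (U : set X) : set X :=
  [set x | exists V, [/\ ClopUp V, waybelow V U & V x]].
Definition core (U : set X) : set X :=
  [set x | exists V, [/\ ClopSUp V, V `<=` U & V x]].
Definition cen (U : set X) : set X :=
  [set x | exists V, [/\ ClopBi V, V `<=` U & V x]].

Definition L_compact := [set: X] = ker [set: X].

(* "A dense in U" (A a subset of U): U is contained in the closure of A *)
Definition stone_L_space := [/\ L_space, L_compact &
  forall U, ClopUp U -> U `<=` closure (cen U)].

Definition coherent_L_space := [/\ L_space, L_compact,
  (forall U, ClopUp U -> U `<=` closure (core U)) &
  (forall U V, ClopUp U -> ClopUp V -> ker (U `&` V) = ker U `&` ker V)].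
End Defs.

Definition L_morphism {X X' : topologicalType} (le : X -> X -> Prop)
  (le' : X' -> X' -> Prop) (f : X -> X') :=
  [/\ continuous f, (forall x y, le x y -> le' (f x) (f y)) &
   forall U : set X', open U -> upset le' U ->
     f @^-1` (closure U) = closure (f @^-1` U)].

Definition coherent_morphism {X1 X2 : topologicalType} (le1 : X1 -> X1 -> Prop)
  (le2 : X2 -> X2 -> Prop) (f : X1 -> X2) :=
  forall U : set X2, ClopUp le2 U -> f @^-1` (core le2 U) `<=` core le1 (f @^-1` U).

From mathcomp Require Import all_boot all_order.
From mathcomp Require Import boolp classical_sets topology.
Set Implicit Arguments. Unset Strict Implicit. Unset Printing Implicit Defensive.
Local Open Scope classical_set_scope.

(* Call a clopen upset V compact when V << V. Clopen bisets C are compact by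
   L-compactness applied to the open upset W `|` ~` C, and clopen Scott
   upsets are compact because their minimal points have open downsets. Since
   cen U is an open upset dense in U, every set way below U, in particular
   every compact subset of U, lies in cen U. A minimal point of a clopen biset
   has an upset as complement, so L-compactness makes it isolated: clopen
   bisets are Scott, whence cen U <= core U. This yields the density of cores,
   ker (U `&` V) = ker U `&` ker V (an intersection of bisets is compact), and
   the coherence of monotone continuous maps, which pull clopen bisets back to
   clopen bisets. *)

Section Centre.
Context {X : topologicalType} (le : X -> X -> Prop).

Lemma waybelowSr V U U' : U `<=` U' -> waybelow le V U -> waybelow le V U'.
Proof. by move=> UU' VU W oW uW /(subset_trans UU'); apply: VU. Qed.

Lemma kerS U U' : U `<=` U' -> ker le U `<=` ker le U'.
Proof. by move=> UU' x [V [cV VU Vx]]; exists V; split => //; apply: waybelowSr VU. Qed.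

Lemma ClopBiI A B : ClopBi le A -> ClopBi le B -> ClopBi le (A `&` B).
Proof.
move=> [cA uA dA] [cB uB dB]; split; first exact: clopenI.
  by move=> x y [Ax Bx] lexy; split; [exact: uA Ax lexy|exact: uB Bx lexy].
by move=> x y [Ay By] lexy; split; [exact: dA Ay lexy|exact: dB By lexy].
Qed.

Lemma open_cen U : open (cen le U).
Proof.
have -> : cen le U = \bigcup_(V in [set V | ClopBi le V /\ V `<=` U]) V.
  by apply/seteqP; split => x [V]; [case=> ? ? ?|case=> ? ? ?]; exists V.
by apply: bigcup_open => V [[[oV _] _ _] _].
Qed.

Lemma upset_cen U : upset le (cen le U).
Proof. by move=> x y [V [[cV uV dV] VU Vx]] lexy; exists V; split => //; apply: uV Vx lexy. Qed.

Lemma waybelow_sub_cen V U :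
  U `<=` closure (cen le U) -> waybelow le V U -> V `<=` cen le U.
Proof. by move=> Ucen; apply; [apply: open_cen|apply: upset_cen|]. Qed.

End Centre.

Lemma ClopBi_preimage {X1 X2 : topologicalType} (le1 : X1 -> X1 -> Prop)
    (le2 : X2 -> X2 -> Prop) (f : X1 -> X2) (C : set X2) :
  continuous f -> (forall x y, le1 x y -> le2 (f x) (f y)) ->
  ClopBi le2 C -> ClopBi le1 (f @^-1` C).
Proof.
move=> cf mf [cC uC dC]; split; first exact: preimage_clopen.
  by move=> x y Cx /mf; apply: uC.
by move=> x y Cy /mf; apply: dC.
Qed.

Section Priestley.
Context {X : topologicalType} (le : X -> X -> Prop) (hP : priestley_space le).

Lemma closed_down_set1 c : closed (down le [set c]).
Proof.
case: hP => _ _ sep; rewrite -openC.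
have -> : ~` down le [set c] = \bigcup_(U in [set U | ClopUp le U /\ ~ U c]) U.
  apply/seteqP; split => z.
    move=> ndz; have [|U [cU uU Uz nUc]] := sep z c; last by exists U.
    by move=> lezc; apply: ndz; exists c.
  by move=> [U [[_ uU] nUc] Uz] [_ -> lezc]; apply: nUc; apply: uU Uz lezc.
by apply: bigcup_open => U [[[oU _] _] _].
Qed.

Lemma chain_lower_bound (F A : set X) : closed F -> A `<=` F -> A !=set0 ->
  total_on A le -> exists2 p, F p & forall c, A c -> le p c.
Proof.
case: hP => [[cptX _ _] [lexx _ le_trans] _] cF AF [c0 Ac0] Atot.
pose B c := F `&` down le [set c].
have B_mono i j : le i j -> B i `<=` B j.
  by move=> leij z [Fz [_ -> lezi]]; split => //; exists j => //; apply: le_trans leij.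
have Bfilter : ProperFilter (filter_from A B).
  apply: filter_from_proper; last by move=> c Ac; exists c; split; [apply: AF|exists c].
  apply: filter_from_filter; first by exists c0.
  move=> i j Ai Aj; have [leij|leji] := Atot _ _ Ai Aj.
    by exists i => // z Biz; split => //; apply: B_mono Biz.
  by exists j => // z Bjz; split => //; apply: B_mono Bjz.
have [p [_ clp]] := cptX _ Bfilter filterT.
have Bp c : A c -> B c p.
  move=> Ac; have /closure_id -> : closed (B c).
    by apply: closedI => //; apply: closed_down_set1.
  by move: clp; rewrite clusterE; apply; exists c.
exists p; first by case: (Bp _ Ac0).
by move=> c /Bp [_ [_ ->]].
Qed.

Lemma minimal_below (F : set X) a : closed F -> F a ->
  exists2 m, minimal_elts le F m & le m a.
Proof.
case: hP => _ [lexx le_anti le_trans] _ cF Fa.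
pose T := {z : X | (F `&` down le [set a]) z}.
pose R (s t : T) := `[< le (sval t) (sval s) >].
have [| | | A Atot | t tmin] := @Zorn T R.
- by move=> s; apply/asboolP.
- move=> r s t /asboolP lesr /asboolP lets; apply/asboolP; exact: le_trans lets lesr.
- move=> [s Ps] [t Pt] /asboolP lets /asboolP lest; apply: eq_exist; exact: le_anti.
- have Fa' : (F `&` down le [set a]) a by split => //; exists a.
  have [Ane0|A0] := pselect (A !=set0); last first.
    by exists (exist _ a Fa') => s As; exfalso; apply: A0; exists s.
  have [||||p Fp pA] := @chain_lower_bound (F `&` down le [set a]) (sval @` A).
  + by apply: closedI => //; apply: closed_down_set1.
  + by move=> _ [s _ <-]; apply: svalP.
  + by case: Ane0 => s As; exists (sval s), s.
  + move=> _ _ [s As <-] [t At <-].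
    by have [/asboolP|/asboolP] := Atot _ _ As At; [right|left].
  by exists (exist _ p Fp) => s As; apply/asboolP; apply: pA; exists s.
- have [Ft [_ -> leta]] := svalP t.
  exists (sval t) => //; split => // y Fy leyt.
  have Ty : (F `&` down le [set a]) y by split => //; exists a => //; apply: le_trans leta.
  by have /(congr1 sval) := tmin (exist _ y Ty) (asboolT leyt).
Qed.

Lemma ClopSUp_waybelow_self V : ClopSUp le V -> waybelow le V V.
Proof.
case: hP => _ [lexx _ _] _ [_ [cV uV minV]] W oW uW VW a Va.
have [m minm lema] := minimal_below cV Va.
have [odm _] : clopen (down le [set m]) := minV _ minm.
have clWm : closure W m by apply: VW; case: minm.
have [w [Ww [_ -> lewm]]] : W `&` down le [set m] !=set0.
  by apply: clWm; apply: open_nbhs_nbhs; split => //; exists m.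
exact: uW (uW _ _ Ww lewm) lema.
Qed.

End Priestley.

Section LCompact.
Context {X : topologicalType} (le : X -> X -> Prop).
Context (hP : priestley_space le) (hLc : L_compact le).

Lemma dense_open_upsetT W :
  open W -> upset le W -> [set: X] `<=` closure W -> W = [set: X].
Proof.
move=> oW uW denseW; apply/seteqP; split => // x _.
have : ker le [set: X] x by rewrite -hLc.
by case=> V [_ VX Vx]; apply: VX Vx.
Qed.

Lemma ClopBi_waybelow_self C : ClopBi le C -> waybelow le C C.
Proof.
move=> [[_ cC] _ dC] W oW uW CW.
have oWC : open (W `|` ~` C) by apply: openU => //; apply: closed_openC.
have uWC : upset le (W `|` ~` C).
  move=> x y [Wx|nCx] lexy; first by left; apply: uW Wx lexy.
  by right => Cy; apply: nCx; apply: dC Cy lexy.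
have denseWC : [set: X] `<=` closure (W `|` ~` C).
  move=> z _; have [Cz|nCz] := pselect (C z); last by apply: subset_closure; right.
  by apply: closureS (CW _ Cz); apply: subsetUl.
move=> z Cz; have /seteqP[_ /(_ z I)] := dense_open_upsetT oWC uWC denseWC.
by case.
Qed.

Lemma open_set1_upset_setC1 y : upset le (~` [set y]) -> open [set y].
Proof.
case: hP => [[_ hX _] _ _] uC.
have cy : closed [set y] by apply/accessible_closed_set1/hausdorff_accessible.
have ncly : ~ closure (~` [set y]) y.
  move=> cly; have denseC : [set: X] `<=` closure (~` [set y]).
    by move=> z _; have [->|zy] := pselect (z = y); last apply: subset_closure.
  by have /seteqP[_ /(_ y I)/(_ erefl)] := dense_open_upsetT (closed_openC cy) uC denseC.
have -> : [set y] = ~` closure (~` [set y]).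
  apply/seteqP; split => [z -> //|z nz].
  by apply: contrapT => zy; apply: nz; apply: subset_closure.
exact/closed_openC/closed_closure.
Qed.

Lemma ClopBi_ClopSUp V : ClopBi le V -> ClopSUp le V.
Proof.
case: hP => [[_ hX _] [lexx _ _] _] [cV uV dV]; split=> //; split=> //; first by case: cV.
move=> y [Vy ymin].
have below_y x : le x y -> x = y by move=> lexy; apply: ymin => //; apply: dV Vy lexy.
have dy : down le [set y] = [set y].
  by apply/seteqP; split => [z [_ -> /below_y]|z ->] //; exists y.
rewrite /spatial /= dy; split; last exact/accessible_closed_set1/hausdorff_accessible.
by apply: open_set1_upset_setC1 => x z xy lexz zy; apply: xy; apply: below_y; rewrite -zy.
Qed.

End LCompact.

Section StoneL.
Context {X : topologicalType} (le : X -> X -> Prop) (hX : stone_L_space le).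

Lemma ker_sub_cen U : ClopUp le U -> ker le U `<=` cen le U.
Proof.
case: hX => _ _ dense hU x [V [_ VU Vx]].
exact: waybelow_sub_cen (dense _ hU) VU _ Vx.
Qed.

Lemma ClopSUp_sub_cen V : ClopSUp le V -> V `<=` cen le V.
Proof.
case: hX => [[hP _ _] _ dense] hV; apply: waybelow_sub_cen.
  by apply: dense; case: hV => cV [_ uV _].
exact: ClopSUp_waybelow_self.
Qed.

Lemma cen_sub_core U : cen le U `<=` core le U.
Proof.
case: hX => [[hP _ _] hLc _] x [V [bV VU Vx]].
by exists V; split => //; apply: ClopBi_ClopSUp.
Qed.

Lemma ker_setI U V : ClopUp le U -> ClopUp le V ->
  ker le (U `&` V) = ker le U `&` ker le V.
Proof.
case: hX => _ hLc _ hU hV; apply/seteqP; split => x.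
  by move=> kx; split; [apply: kerS kx; apply: subIsetl|apply: kerS kx; apply: subIsetr].
move=> [/(ker_sub_cen hU) [C [bC CU Cx]] /(ker_sub_cen hV) [D [bD DV Dx]]].
have bCD := ClopBiI bC bD.
exists (C `&` D); split => //; first by case: bCD.
apply: waybelowSr (setISS CU DV) _.
exact: ClopBi_waybelow_self.
Qed.

Lemma stone_L_coherent : coherent_L_space le.
Proof.
have [hL hLc dense] := hX; split => // [U hU|]; last exact: ker_setI.
exact: subset_trans (dense _ hU) (closureS (@cen_sub_core U)).
Qed.

End StoneL.

Lemma stone_L_monotone_coherent {X1 X2 : topologicalType} (le1 : X1 -> X1 -> Prop)
    (le2 : X2 -> X2 -> Prop) (f : X1 -> X2) :
  stone_L_space le1 -> stone_L_space le2 ->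
  continuous f -> (forall x y, le1 x y -> le2 (f x) (f y)) ->
  coherent_morphism le1 le2 f.
Proof.
move=> h1 h2 cf mf U _ x [V [sV VU Vfx]].
have [C [bC CV Cfx]] := ClopSUp_sub_cen h2 sV Vfx.
exists (f @^-1` C); split => //; last by move=> z /CV /VU.
case: h1 => [[hP1 _ _] hLc1 _]; apply: ClopBi_ClopSUp => //.
exact: ClopBi_preimage bC.
Qed.

Theorem theorem5p14 :
  (forall (X : topologicalType) (le : X -> X -> Prop),
      stone_L_space le -> coherent_L_space le) /\
  (forall (X1 X2 : topologicalType) (le1 : X1 -> X1 -> Prop)
          (le2 : X2 -> X2 -> Prop) (f : X1 -> X2),
      stone_L_space le1 -> stone_L_space le2 -> L_morphism le1 le2 f ->
      coherent_morphism le1 le2 f).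
Proof.
split; first by move=> X le; apply: stone_L_coherent.
move=> X1 X2 le1 le2 f h1 h2 [cf mf _].
exact: stone_L_monotone_coherent.
Qed.
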